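(* Suppose an SCC $F$ is pure-Nash-implemented by $\mathcal M=\langle M,g\rangle$. Let $(i,\theta)\in\mathcal I\times\Theta$ and $m\in PNE^{(\mathcal M,\theta)}$. If $F(\theta)\subseteq\arg\min_{z\in Z^*}u_i^\theta(z)$, $\Xi_i(\theta)\ne\emptyset$, and $Z^*\cap\mathcal L_i^Z(F(\theta),\theta)$ is an $i$-$Z^*$-max set, then $$\bigcup_{m_i'\in M_i}\mathrm{SUPP}[g(m_i',m_{-i})]\subseteq Z^*\cap\mathcal L_i^Z(F(\theta),\theta)\cap\Big(\bigcup_{K\in\Xi_i(\theta)}\bigcap_{\theta'\in K}F(\theta')\Big).$$
   Context: Standing setup: $\mathcal I=\{1,\dots,I\}$ finite, $I\ge 3$; $\Theta$ finite or countably infinite; $Z$ finite; $Y=\Delta(Z)$; $u_i^\theta:Z\to\mathbb R$, $U_i^\theta(y)=\sum_zy_zu_i^\theta(z)$; $\mathcal L_i^Z(\alpha,\theta)=\{z\in Z:U_i^\theta(\alpha)\ge u_i^\theta(z)\}$ and $\mathcal L_i^Z(E,\theta)=\bigcap_{z\in E}\mathcal L_i^Z(z,\theta)$. A mechanism $\mathcal M=\langle M=\times_iM_i,g:M\to Y\rangle$ has countable $M_i$; $PNE^{(\mathcal M,\theta)}$ is the set of pure Nash equilibria at $\theta$. $F$ is pure-Nash-implemented by $\mathcal M$ if $\bigcup_{m\in PNE^{(\mathcal M,\theta)}}\mathrm{SUPP}(g[m])=F(\theta)$ for all $\theta$. A nonempty $E\subseteq Z$ is an $i$-max set if for some $\theta$,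 $E\subseteq\arg\max_{z\in E}u_i^\theta(z)$ and $E\subseteq\arg\max_{z\in Z}u_j^\theta(z)$ for all $j\ne i$. $Z^*=\bigcup_\theta F(\theta)$ if $Z$ is an $i$-max set for some $i$, else $Z^*=Z$. A nonempty $E\subseteq Z^*$ is an $i$-$Z^*$-$\theta$-max set if $E\subseteq\arg\max_{z\in E}u_i^\theta(z)$ and $E\subseteq\arg\max_{z\in Z^*}u_j^\theta(z)$ for all $j\ne i$; $\Lambda^i(E)=\{\theta:E\text{ is an }i\text{-}Z^*\text{-}\theta\text{-max set}\}$ ($=\emptyset$ for $E=\emptyset$); $E$ is an $i$-$Z^*$-max set if $\Lambda^i(E)\ne\emptyset$. $\Theta_i^\theta=\{\theta':F(\theta)\text{ is an }i\text{-}Z^*\text{-}\theta'\text{-max set and }F(\theta)\subseteq F(\theta')\}$; $\Xi_i(\theta)=\{K\subseteq\Theta_i^\theta,K\ne\emptyset:\Theta_i^\theta\cap\Lambda^i(Z^*\cap\mathcal L_i^Z(F(\theta),\theta)\cap\bigcap_{\theta'\in K}F(\theta'))=K\}$. *)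

From HB Require Import structures.
From mathcomp Require Import all_boot all_order all_algebra.
From mathcomp Require Import boolp classical_sets reals.
Set Implicit Arguments. Unset Strict Implicit. Unset Printing Implicit Defensive.
Import Order.TTheory GRing.Theory Num.Theory.
Local Open Scope ring_scope.
Local Open Scope classical_set_scope.

Record lottery (Z : finType) (R : realType) := Lottery {
  lprob :> Z -> R;
  lprob_ge0 : forall z, 0 <= lprob z;
  lprob_sum1 : \sum_(z : Z) lprob z = 1 }.

Section Defs.
Variables (R : realType) (n : nat) (Theta : countType) (Z : finType).
Variable u : 'I_n -> Theta -> Z -> R.
Variable F : Theta -> set Z.

Definition Uexp (y : lottery Z R) (v : Z -> R) : R := \sum_(z : Z) y z * v z.

Definition supp (y : lottery Z R) : set Z := [set z | 0 < y z].

Definition argmax (E : set Z) (f : Z -> R) : set Z :=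
  [set z | E z /\ forall z', E z' -> f z' <= f z].
Definition argmin (E : set Z) (f : Z -> R) : set Z :=
  [set z | E z /\ forall z', E z' -> f z <= f z'].

Definition lowerZ (i : 'I_n) (th : Theta) (z' : Z) : set Z :=
  [set z | u i th z <= u i th z'].
Definition lowerZE (i : 'I_n) (th : Theta) (E : set Z) : set Z :=
  \bigcap_(z' in E) lowerZ i th z'.

Definition imax_set (i : 'I_n) (E : set Z) : Prop :=
  E !=set0 /\ exists th : Theta,
    E `<=` argmax E (u i th) /\
    forall j : 'I_n, j != i -> E `<=` argmax setT (u j th).

Definition Zstar : set Z :=
  if `[< exists i, imax_set i setT >] then \bigcup_(th in setT) F th else setT.

Definition iZth_max (i : 'I_n) (th : Theta) (E : set Z) : Prop :=
  E !=set0 /\ E `<=` Zstar /\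
  E `<=` argmax E (u i th) /\
  forall j : 'I_n, j != i -> E `<=` argmax Zstar (u j th).

(* Lambda^i(E) (empty for E empty, since iZth_max requires nonemptiness) *)
Definition Lambda (i : 'I_n) (E : set Z) : set Theta := [set th | iZth_max i th E].

Definition iZ_max (i : 'I_n) (E : set Z) : Prop := Lambda i E !=set0.

Definition Theta_i (i : 'I_n) (th : Theta) : set Theta :=
  [set th' | iZth_max i th' (F th) /\ F th `<=` F th'].

Definition Xi (i : 'I_n) (th : Theta) : set (set Theta) :=
  [set K | K `<=` Theta_i i th /\ K !=set0 /\
     Theta_i i th `&`
       Lambda i (Zstar `&` lowerZE i th (F th) `&` \bigcap_(th' in K) F th') = K].

Variable M : 'I_n -> countType.
Variable g : (forall i, M i) -> lottery Z R.

(* pure Nash equilibria at theta; dfwith m mi' is the profile (m_i', m_{-i}) *)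
Definition PNE (th : Theta) : set (forall i, M i) :=
  [set m | forall (i : 'I_n) (mi' : M i),
     Uexp (g (dfwith m mi')) (u i th) <= Uexp (g m) (u i th)].

Definition pure_nash_implements : Prop :=
  forall th : Theta, \bigcup_(m in PNE th) supp (g m) = F th.

End Defs.

(* Write L = Z^* /\ L_i^Z(F theta, theta) and let D be the set of outcomes
   reachable by agent i from m, i.e. the union of SUPP g(m_i', m_-i).
   1. Expected utility is monotone in the utility function on the support of
      the lottery (with a strict version); with implementation this gives
      that every outcome lies in Z^*, and, since F(theta) consists of
      i-worst points of Z^*, that D is contained in L.
   2. If E is an i-Z^*-theta'-max set containing D, then (m_i', m_-i) is a
      Nash equilibrium at theta' for every m_i', hence D is contained in
      F(theta').
   3. The operator Phi K = Theta_i^theta /\ Lambda^i(L /\ \bigcap_{K} F) is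
      monotone on the families K with D contained in \bigcap_K F, and it
      preserves them by 2.  A Knaster-Tarski argument restricted to those
      families yields a fixed point K*, nonempty because L is an
      i-Z^*-max set; so K* lies in Xi_i(theta) and D is in \bigcap_{K*} F. *)
From HB Require Import structures.
From mathcomp Require Import all_boot all_order all_algebra.
From mathcomp Require Import boolp classical_sets reals.
Set Implicit Arguments. Unset Strict Implicit. Unset Printing Implicit Defensive.
Import Order.TTheory GRing.Theory Num.Theory.
Local Open Scope ring_scope.
Local Open Scope classical_set_scope.

(* Knaster-Tarski for an operator Phi that is monotone only on a class A of
   admissible sets, provided A is closed under unions and preserved by Phi:
   the union of the admissible post-fixed points is an admissible fixed point. *)
Section RestrictedGreatestFixpoint.
Variables (T : Type) (A : set (set T)) (Phi : set T -> set T).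
Hypothesis A_bigcup : forall Ks : set (set T), Ks `<=` A -> A (\bigcup_(K in Ks) K).
Hypothesis A_Phi : forall K, A K -> A (Phi K).
Hypothesis Phi_mono : forall K1 K2, A K2 -> K1 `<=` K2 -> Phi K1 `<=` Phi K2.

Definition restricted_gfp : set T :=
  \bigcup_(K in [set K | A K /\ K `<=` Phi K]) K.

Lemma restricted_gfp_admissible : A restricted_gfp.
Proof. by apply: A_bigcup => K []. Qed.

Lemma restricted_gfp_fixed : Phi restricted_gfp = restricted_gfp.
Proof.
have AG := restricted_gfp_admissible.
have post : restricted_gfp `<=` Phi restricted_gfp.
  move=> t [K [AK KPhi] Kt]; apply: (Phi_mono AG) (KPhi t Kt).
  by move=> t' K't'; exists K.
apply/seteqP; split=> // t Phit.
exists (Phi restricted_gfp) => //; split; first exact: A_Phi.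
exact: Phi_mono (A_Phi AG) post.
Qed.

End RestrictedGreatestFixpoint.

Lemma dfwith_dfwith (I : eqType) (T_ : I -> Type) (f : forall j, T_ j) (i : I)
    (x y : T_ i) :
  dfwith (dfwith f x) y = dfwith f y.
Proof.
apply: functional_extensionality_dep => j.
by case: (dfwithP f y j) => [|j' ij]; rewrite ?dfwith_in ?dfwith_out.
Qed.

Section ExpectedUtility.
Variables (R : realType) (Z : finType).
Implicit Types (y : lottery Z R) (v w : Z -> R).

Lemma weighted_le y v w :
  (forall z, supp y z -> v z <= w z) -> forall z, y z * v z <= y z * w z.
Proof.
move=> vw z; have := lprob_ge0 y z; rewrite le_eqVlt => /orP[/eqP <-|yz].
  by rewrite !mul0r.
by rewrite ler_pM2l // vw.
Qed.

Lemma Uexp_le y v w :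
  (forall z, supp y z -> v z <= w z) -> Uexp y v <= Uexp y w.
Proof. by move=> vw; apply: ler_sum => z _; apply: weighted_le. Qed.

Lemma Uexp_lt y v w z0 :
  (forall z, supp y z -> v z <= w z) -> supp y z0 -> v z0 < w z0 ->
  Uexp y v < Uexp y w.
Proof.
move=> vw yz0 vw0; rewrite /Uexp (bigD1 z0) //= [X in _ < X](bigD1 z0) //=.
by rewrite ltr_leD ?ltr_pM2l //; apply: ler_sum => z _; apply: weighted_le.
Qed.

Lemma Uexp_cst y (c : R) : Uexp y (fun=> c) = c.
Proof. by rewrite /Uexp -mulr_suml lprob_sum1 mul1r. Qed.

Lemma Uexp_ub y v (S : set Z) (c : R) :
  supp y `<=` S -> (forall z, S z -> v z <= c) -> Uexp y v <= c.
Proof.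
by move=> yS vc; rewrite -[c](Uexp_cst y); apply: Uexp_le => z /yS /vc.
Qed.

Lemma Uexp_lb y v (S : set Z) (c : R) :
  supp y `<=` S -> (forall z, S z -> c <= v z) -> c <= Uexp y v.
Proof.
by move=> yS vc; rewrite -[c](Uexp_cst y); apply: Uexp_le => z /yS /vc.
Qed.

Lemma Uexp_gt y v (S : set Z) (c : R) (z0 : Z) :
  supp y `<=` S -> (forall z, S z -> c <= v z) -> supp y z0 -> c < v z0 ->
  c < Uexp y v.
Proof.
by move=> yS vc yz0 cz0; rewrite -[c](Uexp_cst y); apply: Uexp_lt yz0 cz0 => z /yS /vc.
Qed.

Lemma supp_neq0 y : supp y !=set0.
Proof.
apply/set0P/eqP => supp0.
have : \sum_(z : Z) y z = 0.
  apply: big1 => z _; apply/eqP; rewrite eq_le lprob_ge0 andbT leNgt.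
  by apply/negP => yz; have : supp y z by []; rewrite supp0.
by rewrite lprob_sum1 => /eqP; rewrite oner_eq0.
Qed.

End ExpectedUtility.

Section Mechanism.
Variables (R : realType) (n : nat) (Theta : countType) (Z : finType).
Variables (u : 'I_n -> Theta -> Z -> R) (F : Theta -> set Z).
Variables (M : 'I_n -> countType) (g : (forall i, M i) -> lottery Z R).
Local Notation Zs := (Zstar u F).

Lemma PNE_of_indifferent t p :
  (forall k z w, u k t w <= u k t z) -> PNE u g t p.
Proof.
move=> indiff k a; have [z pz] := supp_neq0 (g p).
apply: (@le_trans _ _ (u k t z)).
  by apply: (Uexp_ub (@subsetT _ _)) => w _; apply: indiff.
by apply: (Uexp_lb (@subsetT _ _)) => w _; apply: indiff.
Qed.

Lemma iZth_max_sub i t E E' :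
  E' !=set0 -> E' `<=` E -> iZth_max u F i t E -> iZth_max u F i t E'.
Proof.
move=> E'0 E'E [_ [EZ [Emax Eothers]]]; split=> //; split.
  by move=> z /E'E /EZ.
split; last by move=> j ji z /E'E; apply: Eothers.
move=> z E'z; split=> // z' /E'E E'z'.
by apply: (Emax z (E'E _ E'z)).2.
Qed.

Hypothesis implements : pure_nash_implements u F g.

Lemma supp_PNE t p : PNE u g t p -> supp (g p) `<=` F t.
Proof. by move=> pNE z pz; rewrite -implements; exists p. Qed.

(* Every outcome of the mechanism lies in Z^*: if Z is an i-max set for some
   state t, all agents are indifferent at t, so every profile is an
   equilibrium at t and its outcomes belong to F t. *)
Lemma supp_Zstar p : supp (g p) `<=` Zs.
Proof.
move=> z pz; rewrite /Zstar; case: asboolP => [[j [_ [t [jmax others]]]]|//].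
exists t => //; apply: supp_PNE pz; apply: PNE_of_indifferent => k z' w.
have [->|kj] := eqVneq k j; first by have [_ ] := jmax z' I; apply.
by have [_ ] := others k kj z' I; apply.
Qed.

(* If from p every deviation of i stays in an i-Z^*-t-max set E, then p is a
   Nash equilibrium at t: agent i already gets her best point of E, and the
   other agents their best point of Z^*. *)
Lemma PNE_of_max_set i t E p :
  iZth_max u F i t E -> supp (g p) `<=` E ->
  (forall a : M i, supp (g (dfwith p a)) `<=` E) -> PNE u g t p.
Proof.
move=> [_ [EZ [Emax Eothers]]] pE devE k a.
have [e pe] := supp_neq0 (g p); have Ee := pE e pe.
case: (eqVneq i k) => [ik|ik].
  subst k; apply: (@le_trans _ _ (u i t e)).
    by apply: (Uexp_ub (devE a)) => w Ew; apply: (Emax e Ee).2.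
  by apply: (Uexp_lb pE) => w Ew; apply: (Emax w Ew).2.
have ki : k != i by rewrite eq_sym.
apply: (@le_trans _ _ (u k t e)).
  by apply: (Uexp_ub (@supp_Zstar _)) => w Zw; apply: (Eothers k ki e Ee).2.
by apply: (Uexp_lb pE) => w Ew; apply: (Eothers k ki w Ew).2; apply: EZ.
Qed.

(* When F th consists of i-worst points of Z^*, any deviation of i from an
   equilibrium at th only reaches outcomes of Z^* that i does not prefer to
   any point of F th: otherwise the deviation would be profitable. *)
Lemma deviation_lower i th p :
  F th `<=` argmin Zs (u i th) -> PNE u g th p ->
  forall a : M i, supp (g (dfwith p a)) `<=` Zs `&` lowerZE u i th (F th).
Proof.
move=> Fmin pNE a z devz; split; first exact: supp_Zstar devz.
move=> z' Fz'; rewrite /lowerZ /= leNgt; apply/negP => z'z.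
have FZ : F th `<=` Zs by move=> w /Fmin [].
have eqpay_le_z' : Uexp (g p) (u i th) <= u i th z'.
  by apply: (Uexp_ub (supp_PNE pNE)) => w Fw; apply: (Fmin w Fw).2; apply: FZ.
have z'_lt_dev : u i th z' < Uexp (g (dfwith p a)) (u i th).
  by apply: (Uexp_gt (@supp_Zstar _) _ devz z'z) => w Zw; apply: (Fmin z' Fz').2.
by have := pNE i a; rewrite leNgt (le_lt_trans eqpay_le_z' z'_lt_dev).
Qed.

Section Deviations.
Variables (i : 'I_n) (th : Theta) (m : forall j, M j).
Hypothesis m_PNE : PNE u g th m.
Hypothesis F_argmin : F th `<=` argmin Zs (u i th).
Local Notation L := (Zs `&` lowerZE u i th (F th)).

Definition deviations : set Z :=
  \bigcup_(a in [set: M i]) supp (g (dfwith m a)).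

Lemma deviations_sub : deviations `<=` L.
Proof. by move=> z [a _]; apply: deviation_lower. Qed.

Lemma deviations_neq0 : deviations !=set0.
Proof. by have [z mz] := supp_neq0 (g (dfwith m (m i))); exists z, (m i). Qed.

(* Step 2: an i-Z^*-t-max set containing the deviations forces them into
   F t, since every deviation profile is then an equilibrium at t. *)
Lemma deviations_sub_F t E :
  iZth_max u F i t E -> deviations `<=` E -> deviations `<=` F t.
Proof.
move=> Emax devE z [a _ az]; apply: (@supp_PNE _ (dfwith m a)) az.
apply: (PNE_of_max_set Emax) => [w aw|b]; first by apply: devE; exists a.
by rewrite dfwith_dfwith => w bw; apply: devE; exists b.
Qed.

Lemma F_sub_L : F th `<=` L.
Proof.
have FZ : F th `<=` Zs by move=> z /F_argmin [].
by move=> z Fz; split; [exact: FZ | move=> z' /FZ; apply: (F_argmin Fz).2].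
Qed.

(* Every state for which L is an i-Z^*-max set belongs to Theta_i^th: the
   equilibria at th stay equilibria there, by step 2 applied to L. *)
Lemma Lambda_L_sub_Theta_i : Lambda u F i L `<=` Theta_i u F i th.
Proof.
move=> t tL; split.
  apply: iZth_max_sub tL; last exact: F_sub_L.
  by have [z mz] := supp_neq0 (g m); exists z; apply: supp_PNE mz.
move=> z; rewrite -implements => -[p pNE pz]; rewrite -implements.
exists p => //; apply: (PNE_of_max_set tL) => [w pw|a].
  exact/F_sub_L/(supp_PNE pNE).
exact: deviation_lower.
Qed.

(* Xi_i(th) consists of the nonempty fixed points of Phi. *)
Definition Phi (K : set Theta) : set Theta :=
  Theta_i u F i th `&` Lambda u F i (L `&` \bigcap_(t in K) F t).

Definition admissible (K : set Theta) : Prop :=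
  deviations `<=` \bigcap_(t in K) F t.

Lemma admissible_bigcup (Ks : set (set Theta)) :
  Ks `<=` admissible -> admissible (\bigcup_(K in Ks) K).
Proof. by move=> adm z dz t [K KsK Kt]; apply: (adm K KsK z dz). Qed.

Lemma admissible_Phi K : admissible K -> admissible (Phi K).
Proof.
move=> admK z dz t [_ tmax]; apply: (deviations_sub_F tmax) dz => w dw.
by split; [exact: deviations_sub | exact: admK].
Qed.

Lemma Phi_mono K1 K2 : admissible K2 -> K1 `<=` K2 -> Phi K1 `<=` Phi K2.
Proof.
move=> adm2 K12 t [tTh tmax]; split=> //; apply: iZth_max_sub tmax.
  have [z dz] := deviations_neq0.
  by exists z; split; [exact: deviations_sub | exact: adm2].
by move=> z [Lz Kz]; split=> // t' /K12; apply: Kz.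
Qed.

(* Step 3: the greatest admissible fixed point of Phi lies in Xi_i(th); it
   is nonempty because Phi set0 = Theta_i^th /\ Lambda^i(L) = Lambda^i(L). *)
Lemma Xi_witness :
  iZ_max u F i L ->
  exists2 K, Xi u F i th K & deviations `<=` \bigcap_(t in K) F t.
Proof.
move=> [t0 t0L]; set G := restricted_gfp admissible Phi.
have admG : admissible G := @restricted_gfp_admissible _ admissible Phi admissible_bigcup.
have fixG : Phi G = G :=
  @restricted_gfp_fixed _ admissible Phi admissible_bigcup admissible_Phi Phi_mono.
exists G => //; split; first by rewrite -fixG => t [].
split=> //; exists t0; rewrite -fixG; apply: (Phi_mono admG (sub0set G)).
split; first exact: Lambda_L_sub_Theta_i.
by rewrite /Lambda /= bigcap_set0 setIT.
Qed.

End Deviations.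

End Mechanism.

Theorem lemma8 (R : realType) (n : nat) (Hn : (3 <= n)%N)
  (Theta : countType) (Z : finType)
  (u : 'I_n -> Theta -> Z -> R) (F : Theta -> set Z)
  (M : 'I_n -> countType) (g : (forall i, M i) -> lottery Z R)
  (Himpl : pure_nash_implements u F g)
  (i : 'I_n) (th : Theta) (m : forall j, M j)
  (Hm : PNE u g th m)
  (Hmin : F th `<=` argmin (Zstar u F) (u i th))
  (HXi : Xi u F i th !=set0)
  (Hmax : iZ_max u F i (Zstar u F `&` lowerZE u i th (F th))) :
  \bigcup_(mi' in [set: M i]) supp (g (dfwith m mi'))
  `<=` Zstar u F `&` lowerZE u i th (F th) `&`
       \bigcup_(K in Xi u F i th) \bigcap_(th' in K) F th'.
Proof.
have [K XiK devK] := Xi_witness Himpl Hm Hmin Hmax.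
move=> z devz; split; first exact: (deviations_sub Himpl Hm Hmin).
by exists K => //; apply: devK.
Qed.
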